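(* Let $\beta\ge 1$ and let $R=(S^0,\dots,S^T)$ be a $\beta$-bounded $T$-covering in a congestion game in which every delay function is $f(x)=x$, and assume $\mathrm{OPT}>0$. Then $$\frac{\rho(R)}{\mathrm{OPT}}\le 2\,\frac{H(R)}{\mathrm{OPT}}+4\beta+1.$$
   Context: A congestion game has players $N=\{1,\dots,n\}$, a finite resource set $E$ and strategy sets $\Sigma_i\subseteq 2^E$. For a profile $S=(s_1,\dots,s_n)$, $n_e(S)=|\{i: e\in s_i\}|$. Here all delays are $f(x)=x$, so the cost of player $i$ is $c_i(S)=\sum_{e\in s_i}n_e(S)$ and the social cost is $C(S)=\sum_i c_i(S)=\sum_{e\in E}n_e(S)^2$. Fix an optimal profile $S^*=(s_1^*,\dots,s_n^* )$ minimizing $C$ and write $\mathrm{OPT}=C(S^* )$. A best response of player $i$ in $S$ is a strategy $s_i^b\in\Sigma_i$ minimizing $c_i(S_{-i},\cdot)$ over $\Sigma_i$ (where $(S_{-i},s_i')$ replaces $s_i$ by $s_i'$); if no strategy strictly decreases $i$'s cost, the best response is $s_i$ itself. A $T$-covering is a sequence of profiles $R=(S^0,\dots,S^T)$ together with players $\pi(1),\dots,\pi(T)$ such that for each $1\le t\le T$, $S^t=(S^{t-1}_{-\pi(t)},s')$ where $s'$ is a best response of $\pi(t)$ in $S^{t-1}$, and every player of $N$ occurs at least once among $\pi(1),\dots,\pi(T)$. It is $\beta$-bounded if every player occurs at most $\beta$ times among $\pi(1),\dots,\pi(T)$. For each player $i$, $\mathrm{last}(i)=\max\{t:\pi(t)=i\}$.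 Define $\rho(R)=\sum_{i=1}^n\sum_{e\in s_i^*}\bigl(n_e(S^{\mathrm{last}(i)-1})+1\bigr)$ and $H(R)=\sum_{i=1}^n\sum_{e\in s_i^*}n_e(S^0)=\sum_{e\in E}n_e(S^0)\,n_e(S^* )$. *)

From HB Require Import structures.
From mathcomp Require Import all_boot all_order all_algebra.
Set Implicit Arguments. Unset Strict Implicit. Unset Printing Implicit Defensive.

Definition profile (n : nat) (E : finType) := {ffun 'I_n -> {set E}}.

Section Congestion.
Variables (n : nat) (E : finType).

Definition load (S : profile n E) (e : E) : nat := #|[set i : 'I_n | e \in S i]|.

Definition cost (S : profile n E) (i : 'I_n) : nat := \sum_(e in S i) load S e.

Definition social_cost (S : profile n E) : nat := \sum_(i < n) cost S i.

Definition valid (Sigma : 'I_n -> {set {set E}}) (S : profile n E) : Prop :=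
  forall i, S i \in Sigma i.

Definition upd (S : profile n E) (i : 'I_n) (s : {set E}) : profile n E :=
  [ffun j => if j == i then s else S j].

Definition best_response (Sigma : 'I_n -> {set {set E}}) (S : profile n E)
    (i : 'I_n) (s' : {set E}) : Prop :=
  [/\ s' \in Sigma i,
      (forall s, s \in Sigma i -> cost (upd S i s') i <= cost (upd S i s) i) &
      ((forall s, s \in Sigma i -> ~~ (cost (upd S i s) i < cost S i)) -> s' = S i)].

Definition optimal (Sigma : 'I_n -> {set {set E}}) (Sstar : profile n E) : Prop :=
  valid Sigma Sstar /\
  forall S, valid Sigma S -> social_cost Sstar <= social_cost S.

Definition is_covering (Sigma : 'I_n -> {set {set E}}) (T : nat)
    (Sq : nat -> profile n E) (pi : nat -> 'I_n) : Prop :=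
  [/\ valid Sigma (Sq 0),
      (forall t, 1 <= t <= T ->
         exists s', best_response Sigma (Sq t.-1) (pi t) s' /\
                    Sq t = upd (Sq t.-1) (pi t) s') &
      (forall i : 'I_n, exists t, 1 <= t <= T /\ pi t = i)].

Definition bounded (beta T : nat) (pi : nat -> 'I_n) : Prop :=
  forall i : 'I_n, count (fun t => pi t == i) (iota 1 T) <= beta.

Definition last_occ (T : nat) (pi : nat -> 'I_n) (i : 'I_n) : nat :=
  \max_(1 <= t < T.+1 | pi t == i) t.

Definition rho (Sstar : profile n E) (T : nat) (Sq : nat -> profile n E)
    (pi : nat -> 'I_n) : nat :=
  \sum_(i < n) \sum_(e in Sstar i) (load (Sq (last_occ T pi i).-1) e + 1).

Definition Hval (Sstar : profile n E) (Sq : nat -> profile n E) : nat :=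
  \sum_(i < n) \sum_(e in Sstar i) load (Sq 0) e.

End Congestion.

From HB Require Import structures.
From mathcomp Require Import all_boot all_order all_algebra zify.
Import Order.TTheory GRing.Theory Num.Theory.

Set Implicit Arguments. Unset Strict Implicit. Unset Printing Implicit Defensive.

(* Let m_e be the largest load of resource e over S^0, ..., S^T and
   d_e = m_e - n_e(S^0) its excess over the initial load; write n*_e for
   the load of e in the optimum S^*.
   (1) rho(R) <= M := sum_i sum_{e in s^*_i} (m_e + 1), and by double counting
       M = H(R) + Z + K with Z = sum_e n*_e d_e and K = sum_e n*_e <= OPT.
   (2) The potential Q = sum_e d_e (d_e + 1) grows in each step by at most
       twice the new cost of the moving player; a best response costs at most
       sum_{e in s^*_i} (m_e + 1), and every player moves at most beta times,
       so Q <= 2 beta M.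
   (3) AM-GM in the form 2 y d <= y^2 + d (d + 1), with y = 4 beta n*_e,
       gives 8 beta Z <= 16 beta^2 OPT + Q. *)

(* Per-resource growth of the pronic potential d (d + 1) when the maximal
   load a becomes max a l: the new load l exceeds the old one ls by at most
   one, and only on resources b of the moving player, who then pays l. *)
Lemma excess_step (a z l ls : nat) (b : bool) :
  z <= a -> ls <= a -> l <= ls.+1 -> (~~ b -> l <= ls) ->
  (maxn a l - z) * (maxn a l - z).+1 <= (a - z) * (a - z).+1 + 2 * (if b then l else 0).
Proof.
move=> za lsa l_le lb.
have [la|al] := leqP l a; first exact: leq_addr.
have -> : l = a.+1 by lia.
case: b lb => lb; last by have := lb isT; lia.
have -> : a.+1 - z = (a - z).+1 by lia.
nia.
Qed.

Lemma amgm_pronic (y d : nat) : 2 * y * d <= y * y + d * d.+1.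
Proof.
have [dy|yd] := leqP d y.
  have [x ->] : exists x, y = d + x by exists (y - d); lia.
  nia.
have [x ->] : exists x, d = y + x by exists (d - y); lia.
nia.
Qed.

Section Congestion.
Variables (n : nat) (E : finType).
Implicit Types (S : profile n E) (Sq : nat -> profile n E) (pi : nat -> 'I_n).

Lemma sum_strategies S (f : E -> nat) :
  \sum_(i < n) \sum_(e in S i) f e = \sum_e load S e * f e.
Proof.
rewrite (eq_bigr (fun i => \sum_e (if e \in S i then f e else 0))); last first.
  by move=> i _; rewrite big_mkcond.
rewrite exchange_big; apply: eq_bigr => e _.
rewrite -big_mkcond /= sum_nat_const /load; congr (_ * _).
by apply: eq_card => i; rewrite inE.
Qed.

Lemma social_cost_loads S : social_cost S = \sum_e load S e * load S e.
Proof. by rewrite /social_cost /cost sum_strategies. Qed.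

Lemma sum_load_le_social_cost S : \sum_e load S e <= social_cost S.
Proof. by rewrite social_cost_loads; apply: leq_sum => e _; nia. Qed.

Lemma load_upd_leS S (j : 'I_n) (s : {set E}) (e : E) :
  load (upd S j s) e <= (load S e).+1.
Proof.
have sub : [set i | e \in upd S j s i] \subset j |: [set i | e \in S i].
  apply/subsetP => i; rewrite !inE ffunE.
  by case: eqP => [->|_ ->]; rewrite ?eqxx ?orbT.
apply: leq_trans (subset_leq_card sub) _.
by rewrite cardsU1; case: (_ \notin _).
Qed.

Lemma load_upd_le S (j : 'I_n) (s : {set E}) (e : E) :
  e \notin s -> load (upd S j s) e <= load S e.
Proof.
move=> es; apply: subset_leq_card; apply/subsetP => i; rewrite !inE ffunE.
by case: eqP => [_ es'|_ ->]; first by rewrite es' in es.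
Qed.

Lemma best_response_cost_le (Sigma : 'I_n -> {set {set E}}) S (i : 'I_n)
    (s' s : {set E}) :
  best_response Sigma S i s' -> s \in Sigma i ->
  cost (upd S i s') i <= \sum_(e in s) (load S e).+1.
Proof.
case=> _ br_min _ sSigma; apply: leq_trans (br_min s sSigma) _.
rewrite /cost ffunE eqxx; apply: leq_sum => e _; exact: load_upd_leS.
Qed.

Definition max_load Sq (t : nat) (e : E) : nat := \max_(u < t.+1) load (Sq u) e.
Definition excess Sq (t : nat) (e : E) : nat := max_load Sq t e - load (Sq 0) e.
Definition potential Sq (t : nat) : nat :=
  \sum_e excess Sq t e * (excess Sq t e).+1.

Lemma max_load_ge Sq (u t : nat) (e : E) : u <= t -> load (Sq u) e <= max_load Sq t e.
Proof.
move=> ut.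
exact: (@leq_bigmax _ (fun u : 'I_t.+1 => load (Sq u) e) (Ordinal (ut : u < t.+1))).
Qed.

Lemma max_loadS Sq (t : nat) (e : E) :
  max_load Sq t.+1 e = maxn (max_load Sq t e) (load (Sq t.+1) e).
Proof. by rewrite /max_load big_ord_recr. Qed.

Lemma potential0 Sq : potential Sq 0 = 0.
Proof. by rewrite /potential big1 // => e _; rewrite /excess /max_load big_ord1 subnn. Qed.

Lemma potential_step Sq (t : nat) (j : 'I_n) (s : {set E}) :
  Sq t.+1 = upd (Sq t) j s ->
  potential Sq t.+1 <= potential Sq t + 2 * cost (Sq t.+1) j.
Proof.
move=> Sq_move.
have Sq_j : Sq t.+1 j = s by rewrite Sq_move ffunE eqxx.
rewrite /potential /cost [X in _ + 2 * X]big_mkcond big_distrr -big_split /=.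
apply: leq_sum => e _; rewrite Sq_j /excess max_loadS.
apply: (excess_step (ls := load (Sq t) e)); rewrite ?max_load_ge // Sq_move.
- exact: load_upd_leS.
- by move=> es; exact: load_upd_le.
Qed.

Lemma sum_moves (F : 'I_n -> nat) pi (s : seq nat) :
  \sum_(u <- s) F (pi u) = \sum_j count (fun t => pi t == j) s * F j.
Proof.
elim: s => [|x s IH]; first by rewrite big_nil big1 // => j _; rewrite mul0n.
rewrite big_cons IH /=; under [RHS]eq_bigr do rewrite mulnDl.
rewrite big_split /=; congr (_ + _).
rewrite (bigD1 (pi x)) //= eqxx mul1n big1 ?addn0 // => j /negbTE.
by rewrite eq_sym => ->.
Qed.

Lemma sum_moves_bounded (beta T : nat) (F : 'I_n -> nat) pi :
  bounded beta T pi ->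
  \sum_(1 <= u < T.+1) F (pi u) <= beta * \sum_j F j.
Proof.
move=> bd; rewrite sum_moves big_distrr /=; apply: leq_sum => j _.
by rewrite leq_mul2r /index_iota subn1 bd orbT.
Qed.

Lemma last_occ_le (T : nat) pi (i : 'I_n) : last_occ T pi i <= T.
Proof.
rewrite /last_occ big_seq_cond; apply: (big_ind (fun x => x <= T)) => //.
  by move=> x y xT yT; rewrite geq_max xT yT.
by move=> t /andP[]; rewrite mem_index_iota ltnS => /andP[].
Qed.

Section Covering.
Variables (Sigma : 'I_n -> {set {set E}}) (Sstar : profile n E).
Variables (T : nat) (Sq : nat -> profile n E) (pi : nat -> 'I_n).
Hypothesis opt : optimal Sigma Sstar.
Hypothesis cover : is_covering Sigma T Sq pi.

Definition envelope : nat :=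
  \sum_(j < n) \sum_(e in Sstar j) (max_load Sq T e).+1.

(* Loads before a player's last move never exceed the maximal loads. *)
Lemma rho_le_envelope : rho Sstar T Sq pi <= envelope.
Proof.
apply: leq_sum => i _; apply: leq_sum => e _; rewrite addn1 ltnS.
by apply: max_load_ge; apply: leq_trans (leq_pred _) (last_occ_le _ _ _).
Qed.

(* Double counting: M = H(R) + Z + K, since m_e = n_e(S^0) + d_e. *)
Lemma envelope_split :
  envelope = Hval Sstar Sq + \sum_e load Sstar e * excess Sq T e
             + \sum_e load Sstar e.
Proof.
rewrite /envelope /Hval !sum_strategies -!big_split /=; apply: eq_bigr => e _.
by rewrite /excess -mulnDr subnKC ?mulnSr // max_load_ge.
Qed.

Lemma move_cost_le (u : nat) :
  1 <= u <= T -> cost (Sq u) (pi u) <= \sum_(e in Sstar (pi u)) (max_load Sq T e).+1.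
Proof.
case: cover => _ moves _ uT; have [s' [br ->]] := moves u uT.
apply: leq_trans (best_response_cost_le br (opt.1 (pi u))) _.
apply: leq_sum => e _; rewrite ltnS max_load_ge //.
by case/andP: uT => _; apply: leq_trans (leq_pred _).
Qed.

Lemma potential_le_sum_costs (t : nat) :
  t <= T -> potential Sq t <= 2 * \sum_(1 <= u < t.+1) cost (Sq u) (pi u).
Proof.
case: cover => _ moves _; elim: t => [|t IH] tT; first by rewrite potential0.
have [s' [_ Sq_move]] := moves t.+1 tT.
apply: leq_trans (potential_step Sq_move) _.
by rewrite big_nat_recr //= mulnDr leq_add2r IH // ltnW.
Qed.

Lemma potential_le_envelope (beta : nat) :
  bounded beta T pi -> potential Sq T <= 2 * (beta * envelope).
Proof.
move=> bd; apply: leq_trans (potential_le_sum_costs (leqnn T)) _.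
rewrite leq_mul2l /=; apply: leq_trans (sum_moves_bounded _ bd).
rewrite big_nat_cond [X in _ <= X]big_nat_cond.
by apply: leq_sum => u /andP[uT _]; exact: move_cost_le.
Qed.

(* Step (3): AM-GM resource by resource, with y = 4 beta n*_e. *)
Lemma amgm_excess (beta : nat) :
  8 * beta * \sum_e load Sstar e * excess Sq T e
  <= 16 * beta * beta * social_cost Sstar + potential Sq T.
Proof.
rewrite social_cost_loads !big_distrr -big_split /=; apply: leq_sum => e _.
have := amgm_pronic (4 * beta * load Sstar e) (excess Sq T e); nia.
Qed.

Lemma rho_le (beta : nat) :
  1 <= beta -> bounded beta T pi ->
  rho Sstar T Sq pi <= 2 * Hval Sstar Sq + (4 * beta + 1) * social_cost Sstar.
Proof.
move=> beta_pos bd.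
set Z := \sum_e load Sstar e * excess Sq T e.
set K := \sum_e load Sstar e.
have QM := potential_le_envelope bd; have amgm := amgm_excess beta.
rewrite envelope_split -/Z -/K in QM.
have Z_le : 3 * Z <= 8 * beta * social_cost Sstar + Hval Sstar Sq + K.
  rewrite -(leq_pmul2l (_ : 0 < 2 * beta)) ?muln_gt0 //.
  move: QM amgm; set Q := potential Sq T; set O := social_cost Sstar; nia.
have OPT_le : social_cost Sstar <= beta * social_cost Sstar by rewrite leq_pmull.
have := sum_load_le_social_cost Sstar; have := rho_le_envelope.
rewrite envelope_split -/Z -/K; move: Z_le OPT_le.
set O := social_cost Sstar; set P := beta * O; lia.
Qed.

End Covering.
End Congestion.

Theorem lemma3 (n : nat) (E : finType) (Sigma : 'I_n -> {set {set E}})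
    (Sstar : profile n E) (T : nat) (Sq : nat -> profile n E)
    (pi : nat -> 'I_n) (beta : nat) :
  (1 <= beta)%N ->
  optimal Sigma Sstar ->
  (0 < social_cost Sstar)%N ->
  is_covering Sigma T Sq pi ->
  bounded beta T pi ->
  ((rho Sstar T Sq pi)%:R / (social_cost Sstar)%:R
     <= 2 * (Hval Sstar Sq)%:R / (social_cost Sstar)%:R + (4 * beta + 1)%:R
   :> rat)%R.
Proof.
move=> beta_pos opt OPT_pos cover bd.
have OPT_pos' : (0 < (social_cost Sstar)%:R :> rat)%R by rewrite ltr0n.
rewrite ler_pdivrMr // mulrDl mulfVK ?gt_eqF // -!natrM -natrD ler_nat.
exact: (rho_le opt cover beta_pos bd).
Qed.
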